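(* In the two-valued atomic model under the proportional-to-square-roots scheme, a $(k,l)$-partition is a Nash equilibrium if the following conditions hold: (1) $l-1\ge k$ (equivalently $\frac{\sqrt a}{\sqrt a+k}\ge\frac{\sqrt a}{\sqrt a+l-1}$); (2) $k\le l-\sqrt a$ (equivalently $\frac{1}{\sqrt a+k}\ge\frac1l$); (3) $k\ge l-\sqrt a-1$ (equivalently $\frac1l\ge\frac{1}{\sqrt a+k+1}$).
   Context: Atomic model with threshold $h$: every player has stake $1$ (small) or $a$ (large), with $h,a$ integers, $2\le a\le h-1$. Pools partition the players; a pool $C$ has reward $\rho(C)=1$ if its total stake is at least $h$, else $0$. Proportional-to-square-roots scheme: player $i$ with stake $a_i$ in pool $C$ receives $\frac{\sqrt{a_i}}{\sum_{j\in C}\sqrt{a_j}}\rho(C)$. A partition into winning pools is a Nash equilibrium if no player can strictly increase her payment by moving to another pool of the partition or opening a new pool alone. For integers $k,l$ with $k+a\ge h$ and $l\ge h+1$, a $(k,l)$-partition consists only of pools of the types: Type A: exactly one large player and $k$ small players; Type B: $l$ small players; Type C: $l-1$ small players. *)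

From HB Require Import structures.
From mathcomp Require Import all_boot all_order all_algebra.
Set Implicit Arguments. Unset Strict Implicit. Unset Printing Implicit Defensive.
Import Order.TTheory GRing.Theory Num.Theory.
Local Open Scope ring_scope.

Section AtomicModel.
Variables (R : rcfType) (T : finType).

Definition pool_stake (s : T -> nat) (C : {set T}) : nat := (\sum_(j in C) s j)%N.

Definition reward (h : nat) (s : T -> nat) (C : {set T}) : R :=
  if (h <= pool_stake s C)%N then 1 else 0.

Definition payment (h : nat) (s : T -> nat) (i : T) (C : {set T}) : R :=
  Num.sqrt (s i)%:R / (\sum_(j in C) Num.sqrt (s j)%:R) * reward h s C.

Definition nash_equilibrium (h : nat) (s : T -> nat) (P : {set {set T}}) : Prop :=
  [/\ partition P [set: T],
      (forall C, C \in P -> (h <= pool_stake s C)%N) &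
      forall i : T,
        (forall C, C \in P -> C != pblock P i ->
           ~ (payment h s i (pblock P i) < payment h s i (i |: C)))
        /\ ~ (payment h s i (pblock P i) < payment h s i [set i])].

Definition num_large (a : nat) (s : T -> nat) (C : {set T}) : nat :=
  #|[set j in C | s j == a]|.
Definition num_small (s : T -> nat) (C : {set T}) : nat :=
  #|[set j in C | s j == 1%N]|.

(* (k,l)-partition: a partition of the players consisting only of pools of
   Type A (one large, k small), Type B (l small), Type C (l-1 small) *)
Definition kl_partition (a : nat) (s : T -> nat) (k l : nat) (P : {set {set T}}) : Prop :=
  partition P [set: T] /\
  forall C, C \in P ->
    [\/ num_large a s C = 1%N /\ num_small s C = k,
        num_large a s C = 0%N /\ num_small s C = l
      | num_large a s C = 0%N /\ num_small s C = l.-1].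

End AtomicModel.

(* In a (k,l)-partition every pool is winning, and its sum of square-rooted
   stakes is sqrt a + k, l or l - 1.  A player with stake w who joins another
   pool Y trades her share sqrt w / S_X for sqrt w / (sqrt w + S_Y), which is
   no better as soon as S_X <= 1 + S_Y, since sqrt w >= 1; conditions (2)
   and (3) say exactly that the three possible sums are within 1 of each
   other.  Opening a pool alone is never profitable, since every stake is
   below h. *)
From HB Require Import structures.
From mathcomp Require Import all_boot all_order all_algebra.
From mathcomp Require Import lra zify.
Set Implicit Arguments. Unset Strict Implicit. Unset Printing Implicit Defensive.
Import Order.TTheory GRing.Theory Num.Theory.

Local Open Scope ring_scope.

Lemma ler_share_join (R : numFieldType) (w x y : R) :
  0 < w -> 0 < x -> x <= w + y -> w / (w + y) <= w / x.
Proof.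
move=> w_gt0 x_gt0 x_le; have wy_gt0 : 0 < w + y by exact: lt_le_trans x_le.
by rewrite ler_pM2l // lef_pV2 ?posrE.
Qed.

Lemma sqrtr_nat_ge1 (R : rcfType) (n : nat) : (0 < n)%N -> 1 <= Num.sqrt (n%:R : R).
Proof. by move=> n_gt0; rewrite -[X in X <= _]sqrtr1 ler_wsqrtr // ler1n. Qed.

Section SquareRootScheme.
Variables (R : rcfType) (T : finType) (h : nat) (s : T -> nat).

Definition sqrt_weight (C : {set T}) : R := \sum_(j in C) Num.sqrt (s j)%:R.

Lemma payment_winning i C :
  (h <= pool_stake s C)%N -> payment R h s i C = Num.sqrt (s i)%:R / sqrt_weight C.
Proof. by move=> win; rewrite /payment /reward win mulr1. Qed.

Lemma payment_alone i : (s i < h)%N -> payment R h s i [set i] = 0.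
Proof. by move=> lt_h; rewrite /payment /reward /pool_stake !big_set1 leqNgt lt_h mulr0. Qed.

Lemma sqrt_weight_setU1 i (C : {set T}) :
  i \notin C -> sqrt_weight (i |: C) = Num.sqrt (s i)%:R + sqrt_weight C.
Proof. exact: big_setU1. Qed.

Hypothesis s_gt0 : forall i, (0 < s i)%N.

Lemma sqrt_weight_gt0 C : C != set0 -> 0 < sqrt_weight C.
Proof.
case/set0Pn=> j jC; rewrite /sqrt_weight (bigD1 j) //=.
have := sqrtr_nat_ge1 R (s_gt0 j).
have : 0 <= \sum_(i in C | i != j) Num.sqrt (s i)%:R :> R.
  by apply: sumr_ge0 => *; apply: sqrtr_ge0.
lra.
Qed.

Lemma nash_equilibrium_balanced (P : {set {set T}}) :
  partition P [set: T] ->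
  (forall C, C \in P -> (h <= pool_stake s C)%N) ->
  (forall i, (s i < h)%N) ->
  (forall X Y, X \in P -> Y \in P -> sqrt_weight X <= 1 + sqrt_weight Y) ->
  nash_equilibrium R h s P.
Proof.
move=> partP win lt_h balanced; split=> // i.
have /and3P [_ trivP set0P] := partP.
have XP : pblock P i \in P by rewrite pblock_mem // (cover_partition partP).
set X := pblock P i in XP *.
have X_gt0 : 0 < sqrt_weight X by rewrite sqrt_weight_gt0 //; apply: contraNneq set0P => <-.
rewrite payment_winning ?win //; split=> [C CP CX|]; last first.
  by rewrite payment_alone //; apply/negP; rewrite -leNgt divr_ge0 ?sqrtr_ge0 ?ltW.
have iC : i \notin C.
  by apply: contra CX => iC; rewrite /X (def_pblock trivP CP iC).
have win_iC : (h <= pool_stake s (i |: C))%N.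
  by rewrite /pool_stake big_setU1 //= (leq_trans (win C CP)) ?leq_addl.
rewrite payment_winning // sqrt_weight_setU1 //.
apply/negP; rewrite -leNgt.
apply: ler_share_join => //; first exact: lt_le_trans (sqrtr_nat_ge1 R (s_gt0 i)).
by have := balanced _ _ XP CP; have := sqrtr_nat_ge1 R (s_gt0 i); lra.
Qed.

End SquareRootScheme.

Section KLPartition.
Variables (T : finType) (a k l : nat) (s : T -> nat).
Hypothesis s_two_valued : forall i, s i = 1%N \/ s i = a.
Hypothesis a_gt1 : (1 < a)%N.

Lemma sum_two_valued (V : nmodType) (f : nat -> V) (C : {set T}) :
  \sum_(j in C) f (s j) = f a *+ num_large a s C + f 1%N *+ num_small s C.
Proof.
rewrite (bigID (fun j => s j == a)) /= /num_large /num_small -!sumr_const.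
congr (_ + _); rewrite big_mkcond [RHS]big_mkcond /=; apply: eq_bigr => j _.
  by rewrite inE; case: (j \in C) => //=; case: eqP => // ->.
rewrite inE; case: (j \in C) => //=.
by case: (s_two_valued j) => ->; rewrite ?eqxx /= ?(ltn_eqF a_gt1) // eq_sym (ltn_eqF a_gt1).
Qed.

Lemma kl_pool_sum (V : nmodType) (f : nat -> V) (C : {set T}) :
  [\/ num_large a s C = 1%N /\ num_small s C = k,
      num_large a s C = 0%N /\ num_small s C = l
    | num_large a s C = 0%N /\ num_small s C = l.-1] ->
  [\/ \sum_(j in C) f (s j) = f a + f 1%N *+ k,
      \sum_(j in C) f (s j) = f 1%N *+ l
    | \sum_(j in C) f (s j) = f 1%N *+ l.-1].
Proof.
by rewrite sum_two_valued; case=> -[-> ->]; [apply: Or31 | apply: Or32 | apply: Or33];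
   rewrite ?add0r.
Qed.

End KLPartition.

Theorem lemmaD1 (R : rcfType) (T : finType) (h a k l : nat) (s : T -> nat)
    (P : {set {set T}}) :
  (2 <= a)%N -> (a <= h.-1)%N ->
  (h <= k + a)%N -> (h.+1 <= l)%N ->
  (forall i, s i = 1%N \/ s i = a) ->
  kl_partition a s k l P ->
  (k <= l.-1)%N ->
  (k%:R : R) <= l%:R - Num.sqrt (a%:R : R) ->
  l%:R - Num.sqrt (a%:R : R) - 1 <= (k%:R : R) ->
  nash_equilibrium R h s P.
Proof.
(* Condition (1) is implied by (2), since sqrt a >= 1. *)
move=> a_gt1 a_le_h h_le_ka h_lt_l s2 [partP kl] _ c2 c3.
have l_pred : l.-1.+1 = l by lia.
have s_gt0 i : (0 < s i)%N by case: (s2 i) => ->; lia.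
apply: nash_equilibrium_balanced => //.
- move=> C /kl /(kl_pool_sum s2 a_gt1 (fun n => n%:R : R)).
  rewrite /pool_stake -(ler_nat R) natr_sum.
  by case=> ->; rewrite ?mulr1n -?natrD ler_nat; lia.
- by move=> i; case: (s2 i) => ->; lia.
- have natr_lpred : (l.-1)%:R = l%:R - 1 :> R by rewrite -{2}l_pred -natr1 addrK.
  have sqrt_a_ge1 := sqrtr_nat_ge1 R (ltnW a_gt1).
  move=> X Y /kl /(kl_pool_sum s2 a_gt1 (fun n => Num.sqrt (n%:R : R))) wX.
  move=> /kl /(kl_pool_sum s2 a_gt1 (fun n => Num.sqrt (n%:R : R))) wY.
  by rewrite /sqrt_weight; case: wX => ->; case: wY => ->; rewrite sqrtr1 ?natr_lpred; lra.
Qed.
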